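(* There are $15$ syzygetic quadruples. Denote the vanishing order of the differential form $\omega=T\,dz_0\wedge dz_1\wedge dz_2$ (pulled back to $\tilde D$) at $q_\nu=0$ by $k_\nu$. Then one has for $(k_0,k_1,k_2)$ the possibilities $(0,0,0)$ (eight cases), $(1,1,1)$ (one case), $(0,0,1)$ (two cases), $(0,1,0)$ (two cases), $(1,0,0)$ (two cases).
   Context: Genus two, $Z=\begin{pmatrix}z_0&z_1\\ z_1&z_2\end{pmatrix}\in\mathbb{H}_2$. Even theta characteristics $m={a\choose b}\in(\mathbb{Z}/2\mathbb{Z})^4$ (${}^ta\,b=0$), theta constants $\vartheta[m](Z)=\sum_{g\in\mathbb{Z}^2}e^{\pi i(Z[g+a/2]+{}^tb(g+a/2))}$. A syzygetic quadruple is a set of four distinct even characteristics such that the sum of any three is even. For a syzygetic quadruple let $\mathfrak{n}=\{n_1,\dots,n_6\}$ be the complementary even characteristics and $T=T_{\mathfrak{n}}=\prod_{\nu=1}^6\vartheta[n_\nu]$, a cusp form of weight 3 for a conjugate of $\Gamma_{2,0}[2]$ whose character is trivial on $\Gamma_2[4]$. Use the normal coordinates of level 4: $q_0=e^{2\pi i(z_0+z_1)/4}$, $q_2=e^{2\pi i(z_2+z_1)/4}$, $q_1=e^{-2\pi i z_1/4}$; the image $D$ of $\mathbb{H}_2$ is a Reinhardt domain with completion $\tilde D=D\cup\{q\in\mathbb{C}^3;\ q_0q_1q_2=0\}$, which maps locally biholomorphically to Igusa's desingularization $\tilde X(4)$ (monoidal transform along the boundary of the Satake compactification of $\mathbb{H}_2/\Gamma_2[4]$).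 Pulled back to $\tilde D$, $\omega$ becomes $C\,\frac{T}{q_0q_1q_2}\,dq_0\wedge dq_1\wedge dq_2$ with a constant $C$, where $T$ is written as a power series in $q_0,q_1,q_2$. *)

From HB Require Import structures.
From mathcomp Require Import all_boot all_order all_algebra all_field.
Set Implicit Arguments. Unset Strict Implicit. Unset Printing Implicit Defensive.
Import Order.TTheory GRing.Theory Num.Theory.
Local Open Scope ring_scope.

(* Theta characteristics m = (a;b), a = (a1,a2), b = (b1,b2) in (Z/2Z)^4,
   represented with entries in bool (false = 0, true = 1). *)
Definition char2 : finType := ((bool * bool) * (bool * bool))%type.
Definition ca1 (m : char2) : bool := m.1.1.
Definition ca2 (m : char2) : bool := m.1.2.
Definition cb1 (m : char2) : bool := m.2.1.
Definition cb2 (m : char2) : bool := m.2.2.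

Definition even_char (m : char2) : bool :=
  ~~ addb (ca1 m && cb1 m) (ca2 m && cb2 m).

Definition add_char (m n : char2) : char2 :=
  ((addb (ca1 m) (ca1 n), addb (ca2 m) (ca2 n)),
   (addb (cb1 m) (cb1 n), addb (cb2 m) (cb2 n))).

Definition syzygetic (Q : {set char2}) : bool :=
  [&& #|Q| == 4%N, [forall x in Q, even_char x] &
      [forall x in Q, forall y in Q, forall z in Q,
         [&& x != y, y != z & x != z] ==> even_char (add_char (add_char x y) z)]].

Definition compl_even (Q : {set char2}) : {set char2} :=
  [set n | even_char n & n \notin Q].

(* Formal power series in q0, q1, q2 with exponents in (1/2)N; a series F
   is stored through its DOUBLED exponents: F n0 n1 n2 is the coefficient of
   q0^(n0/2) q1^(n1/2) q2^(n2/2). *)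
Definition qseries := nat -> nat -> nat -> algC.

Definition mulS (F G : qseries) : qseries := fun n0 n1 n2 =>
  \sum_(i0 < n0.+1) \sum_(i1 < n1.+1) \sum_(i2 < n2.+1)
     F i0 i1 i2 * G (n0 - i0)%N (n1 - i1)%N (n2 - i2)%N.

Definition oneS : qseries := fun n0 n1 n2 =>
  if [&& n0 == 0%N, n1 == 0%N & n2 == 0%N] then 1 else 0.

(* q-expansion of theta[m](Z) in the level-4 normal coordinates
   q0 = e(2 pi i (z0+z1)/4), q2 = e(2 pi i (z2+z1)/4), q1 = e(-2 pi i z1/4).
   With y = 2g + a in Z^2 (y = a mod 2) the term of g is
   i^(b.y) q0^(y1^2/2) q1^((y1-y2)^2/2) q2^(y2^2/2).
   The coefficient at doubled exponents (n0,n1,n2) is the (finite) sum over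
   the y with y1^2 = n0, (y1-y2)^2 = n1, y2^2 = n2, y = a mod 2. *)
Definition theta_coef (m : char2) : qseries := fun n0 n1 n2 =>
  \sum_(u < (2 * n0).+1) \sum_(v < (2 * n2).+1)
    let y1 : int := (u : nat)%:Z - n0%:Z in
    let y2 : int := (v : nat)%:Z - n2%:Z in
    if [&& y1 ^+ 2 == n0%:Z, y2 ^+ 2 == n2%:Z, (y1 - y2) ^+ 2 == n1%:Z,
           odd `|y1|%N == ca1 m & odd `|y2|%N == ca2 m]
    then 'i ^ ((cb1 m : nat)%:Z * y1 + (cb2 m : nat)%:Z * y2)
    else 0.

Definition Tser (Q : {set char2}) : qseries :=
  foldr mulS oneS [seq theta_coef n | n <- enum (compl_even Q)].

Definition expo (n : nat * nat * nat) (nu : 'I_3) : nat :=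
  match val nu with 0%N => n.1.1 | 1%N => n.1.2 | _ => n.2 end.

Definition coefS (F : qseries) (n : nat * nat * nat) : algC := F n.1.1 n.1.2 n.2.

(* F vanishes along q_nu = 0 to DOUBLED order d (i.e. to order d/2) *)
Definition vanishing_order2 (F : qseries) (nu : 'I_3) (d : nat) : Prop :=
  (exists n, expo n nu = d /\ coefS F n != 0) /\
  (forall n, (expo n nu < d)%N -> coefS F n = 0).

(* omega pulled back to D~ is C * T/(q0 q1 q2) dq0 dq1 dq2 (C <> 0), so its
   vanishing order along q_nu = 0 is k iff T vanishes there to order k+1. *)
Definition omega_order (Q : {set char2}) (nu : 'I_3) (k : nat) : Prop :=
  vanishing_order2 (Tser Q) nu (2 * k.+1).

From HB Require Import structures.
From mathcomp Require Import all_boot all_order all_algebra all_field zify.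
Set Implicit Arguments. Unset Strict Implicit. Unset Printing Implicit Defensive.
Import Order.TTheory GRing.Theory Num.Theory.
Local Open Scope ring_scope.

(* The terms of theta[m], m = (a; b), have doubled exponents (y1^2, (y1-y2)^2, y2^2) with
   y = a mod 2, hence dominate (a1, a1 + a2 mod 2, a2) componentwise; the terms reaching this
   corner do not cancel because m is even. Leading monomials multiply, so along q_nu = 0 the
   product T vanishes to the sum of the corner exponents of its six factors, and k_nu is that
   (halved) order minus one. The counts are then a finite inspection of the 2^16 subsets of the
   characteristics. *)

Definition le3 (a b : nat * nat * nat) : bool :=
  [&& a.1.1 <= b.1.1, a.1.2 <= b.1.2 & a.2 <= b.2]%N.

Definition leading_term (F : qseries) (c : nat * nat * nat) : Prop :=
  coefS F c != 0 /\ forall n, ~~ le3 c n -> coefS F n = 0.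

Lemma leading_term_vanishing_order F c :
  leading_term F c -> forall nu, vanishing_order2 F nu (expo c nu).
Proof.
move=> [Fc F0] nu; split; first by exists c.
move=> n; rewrite /expo => lt_nc; apply: F0; rewrite /le3.
by case: nu lt_nc => [[|[|[|//]]] _] /= ?; lia.
Qed.

Lemma leading_term_one : leading_term oneS 0.
Proof. by split=> [|[[n0 n1] n2]]; rewrite /coefS /oneS /le3 /= ?oner_neq0. Qed.

Lemma leading_term_mulS F G a b :
  leading_term F a -> leading_term G b -> leading_term (mulS F G) (a + b).
Proof.
case: a b => [[a0 a1] a2] [[b0 b1] b2] [Fa F0] [Gb G0].
have -> : (a0, a1, a2) + (b0, b1, b2) = (a0 + b0, a1 + b1, a2 + b2)%N by [].
have term0 i0 i1 i2 n0 n1 n2 :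
    ~~ (le3 (a0, a1, a2) (i0, i1, i2) && le3 (b0, b1, b2) (n0 - i0, n1 - i1, n2 - i2))%N ->
    F i0 i1 i2 * G (n0 - i0)%N (n1 - i1)%N (n2 - i2)%N = 0.
  by rewrite negb_and => /orP[/F0 | /G0]; rewrite /coefS /= => ->; rewrite ?mul0r ?mulr0.
split.
- have lt_a0 : (a0 < (a0 + b0).+1)%N by lia.
  have lt_a1 : (a1 < (a1 + b1).+1)%N by lia.
  have lt_a2 : (a2 < (a2 + b2).+1)%N by lia.
  rewrite /coefS /mulS /= (big_only1 (Ordinal lt_a0)) //= => [|i0 ne0 _]; last first.
    apply: big1 => i1 _; apply: big1 => i2 _; apply: term0.
    move: ne0 (ltn_ord i0) (ltn_ord i1) (ltn_ord i2); rewrite -val_eqE /le3 /=; lia.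
  rewrite (big_only1 (Ordinal lt_a1)) //= => [|i1 ne1 _]; last first.
    apply: big1 => i2 _; apply: term0.
    move: ne1 (ltn_ord i1) (ltn_ord i2); rewrite -val_eqE /le3 /=; lia.
  rewrite (big_only1 (Ordinal lt_a2)) //= => [|i2 ne2 _]; last first.
    by apply: term0; move: ne2 (ltn_ord i2); rewrite -val_eqE /le3 /=; lia.
  by rewrite !addKn mulf_neq0.
- move=> [[n0 n1] n2] lt_n; rewrite /coefS /mulS /=.
  apply: big1 => i0 _; apply: big1 => i1 _; apply: big1 => i2 _; apply: term0.
  by move: lt_n (ltn_ord i0) (ltn_ord i1) (ltn_ord i2); rewrite /le3 /=; lia.
Qed.

Lemma leading_term_foldr (I : eqType) (s : seq I) (F : I -> qseries) c :
  (forall i, i \in s -> leading_term (F i) (c i)) ->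
  leading_term (foldr mulS oneS (map F s)) (\sum_(i <- s) c i).
Proof.
elim: s => [|i s IHs] lFc; first by rewrite big_nil; exact: leading_term_one.
rewrite big_cons; apply: leading_term_mulS; first by apply: lFc; rewrite mem_head.
by apply: IHs => j js; apply: lFc; rewrite in_cons js orbT.
Qed.

Definition theta_lead (m : char2) : nat * nat * nat :=
  (ca1 m : nat, addb (ca1 m) (ca2 m) : nat, ca2 m : nat).

Lemma sqrz_nat_gt0 (y : int) n : y ^+ 2 = n%:Z -> y != 0 -> (0 < n)%N.
Proof.
move=> sq_y; apply: contra_neqT; rewrite -eqn0Ngt => /eqP n0.
by apply/eqP; rewrite -sqrf_eq0 sq_y n0.
Qed.

Lemma odd_absz_neq0 (y : int) : odd `|y|%N -> y != 0.
Proof. by apply: contraTneq => ->. Qed.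

Lemma theta_coef_eq0 m n : ~~ le3 (theta_lead m) n -> coefS (theta_coef m) n = 0.
Proof.
case: n => [[n0 n1] n2] below; apply: big1 => u _; apply: big1 => v _ /=.
move: (u%:Z - n0%:Z) (v%:Z - n2%:Z) => y1 y2.
case: ifP => // /and5P[/eqP sq1 /eqP sq2 /eqP sq12 /eqP odd1 /eqP odd2].
case/negP: below; rewrite /le3 /theta_lead /= -odd1 -odd2.
apply/and3P; split.
- by case: (boolP (odd `|y1|%N)) => // /odd_absz_neq0; exact: sqrz_nat_gt0.
- case: (boolP (addb _ _)) => // ne; apply: sqrz_nat_gt0 sq12 _.
  by rewrite subr_eq0; apply: contraTneq ne => ->; rewrite addbb.
- by case: (boolP (odd `|y2|%N)) => // /odd_absz_neq0; exact: sqrz_nat_gt0.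
Qed.

Lemma theta_lead_coef_neq0 m : even_char m -> coefS (theta_coef m) (theta_lead m) != 0.
Proof.
(* The corner coefficient is 1, 2 or i^2 + i^-2 = -2; for odd m it would be i + i^-1 = 0. *)
have two_neq0 : (1 + 1 : algC) != 0 by rewrite -[1 + 1]/(2%:R) pnatr_eq0.
case: m => [[[] []] [[] []]] //= _; rewrite /coefS /theta_coef /= !big_ord_recr !big_ord0 /=;
  repeat match goal with |- context [if ?c then _ else _] =>
    let v := eval vm_compute in c in change c with v; cbv iota beta end;
  repeat match goal with |- context ['i ^ ?z] =>
    let v := eval vm_compute in z in progress change z with v end;
  rewrite /exprz ?(add0r, addr0, expr0, sqrCi, invrN1) ?oner_neq0 //.
by rewrite -opprD oppr_eq0.
Qed.

Lemma leading_term_theta m : even_char m -> leading_term (theta_coef m) (theta_lead m).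
Proof. by move=> even_m; split; [exact: theta_lead_coef_neq0 | exact: theta_coef_eq0]. Qed.

Definition Tser_lead (Q : {set char2}) : nat * nat * nat :=
  \sum_(n <- enum (compl_even Q)) theta_lead n.

Lemma leading_term_Tser Q : leading_term (Tser Q) (Tser_lead Q).
Proof.
apply: leading_term_foldr => n; rewrite mem_enum inE => /andP[even_n _].
exact: leading_term_theta.
Qed.

Fixpoint subseqs (T : Type) (s : seq T) : seq (seq T) :=
  if s is x :: s' then [seq x :: l | l <- subseqs s'] ++ subseqs s' else [:: [::]].

Lemma mem_subseqs (T : eqType) (s l : seq T) : (l \in subseqs s) = subseq l s.
Proof.
elim: s l => [|x s IHs] [|y l] //=; rewrite mem_cat IHs ?sub0seq ?orbT //.
have -> : (y :: l \in [seq x :: l' | l' <- subseqs s]) = (y == x) && (l \in subseqs s).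
  by apply/mapP/andP => [[l' l'_in [-> ->]] | [/eqP-> l_in]]; [split | exists l].
rewrite IHs; case: eqVneq => [->|_] //=.
by apply/idP/idP => [/orP[//|/cons_subseq] | ->].
Qed.

Lemma subseqs_uniq (T : eqType) (s : seq T) : uniq s -> uniq (subseqs s).
Proof.
elim: s => //= x s IHs /andP[x_notin_s /IHs uniq_ss].
rewrite cat_uniq map_inj_uniq ?uniq_ss ?andbT => [|? ? []//].
apply/hasPn => l; rewrite mem_subseqs => sub_l; apply/mapP => -[l' _ def_l].
by move: x_notin_s; rewrite (mem_subseq sub_l) // def_l mem_head.
Qed.

Section EnumerationBySeq.
Variables (T : finType) (s : seq T).
Hypotheses (s_uniq : uniq s) (mem_s : forall x, x \in s).

Lemma perm_enum_filter (A : {pred T}) : perm_eq (enum A) [seq x <- s | x \in A].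
Proof.
apply: uniq_perm; rewrite ?enum_uniq ?filter_uniq // => x.
by rewrite mem_enum mem_filter mem_s andbT.
Qed.

Lemma card_count (A : {pred T}) : #|A| = count [in A] s.
Proof. by rewrite cardE (perm_size (perm_enum_filter A)) size_filter. Qed.

Lemma forall_in_filter (A : {pred T}) (P : pred T) :
  [forall x in A, P x] = all P [seq x <- s | x \in A].
Proof.
apply/forall_inP/allP => P_A x; first by rewrite mem_filter => /andP[/P_A].
by move=> x_A; apply: P_A; rewrite mem_filter x_A mem_s.
Qed.

End EnumerationBySeq.

Lemma card_set_filter (T : finType) (s : seq T) (P : pred (seq T)) :
  uniq s -> (forall x, x \in s) ->
  #|[set Q : {set T} | P [seq x <- s | x \in Q]]| = count P (subseqs s).
Proof.
move=> s_uniq mem_s; pose f (Q : {set T}) := [seq x <- s | x \in Q].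
have mem_f Q x : (x \in f Q) = (x \in Q) by rewrite mem_filter mem_s andbT.
have f_inj : injective f by move=> Q1 Q2 eq_f; apply/setP => x; rewrite -!mem_f eq_f.
have perm_f : perm_eq [seq f Q | Q <- enum {set T}] (subseqs s).
  apply: uniq_perm => [|| l]; rewrite ?(map_inj_uniq f_inj) ?enum_uniq ?subseqs_uniq //.
  rewrite mem_subseqs; apply/mapP/idP => [[Q _ ->] | /(subseq_uniqP s_uniq) def_l].
    exact: filter_subseq.
  exists [set x in l]; first by rewrite mem_enum.
  by rewrite {1}def_l; apply: eq_filter => x; rewrite inE.
rewrite -(permP perm_f) count_map cardsE.
by rewrite (@card_count _ (enum {set T})) ?enum_uniq // => Q; rewrite mem_enum.
Qed.


Definition bool2 : seq (bool * bool) :=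
  [seq (x, y) | x <- [:: false; true], y <- [:: false; true]].

Definition chars : seq char2 := [seq (a, b) | a <- bool2, b <- bool2].

Lemma chars_uniq : uniq chars. Proof. by []. Qed.

Lemma mem_chars m : m \in chars. Proof. by case: m => [[[] []] [[] []]]. Qed.

(* The size test is an [if] rather than a conjunct so that, under [vm_compute],
   the cubic loop only runs on the 4-element lists. *)
Definition syzygetic_seq (l : seq char2) : bool :=
  if size l == 4%N then
    all even_char l &&
    all (fun x => all (fun y => all (fun z =>
      [&& x != y, y != z & x != z] ==> even_char (add_char (add_char x y) z)) l) l) l
  else false.

Lemma syzygetic_filter Q : syzygetic Q = syzygetic_seq [seq x <- chars | x \in Q].
Proof.
have all_Q (P : pred char2) : [forall x in Q, P x] = all P [seq x <- chars | x \in Q].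
  exact: forall_in_filter mem_chars _ _.
rewrite /syzygetic /syzygetic_seq (card_count chars_uniq mem_chars) -size_filter !all_Q.
congr [&& _, _ & _]; apply: eq_all => x; rewrite all_Q; apply: eq_all => y; exact: all_Q.
Qed.

Definition lead_seq (l : seq char2) : nat * nat * nat :=
  \sum_(n <- chars | even_char n && (n \notin l)) theta_lead n.

Lemma Tser_lead_filter Q : Tser_lead Q = lead_seq [seq x <- chars | x \in Q].
Proof.
rewrite /Tser_lead (perm_big _ (perm_enum_filter chars_uniq mem_chars _)) big_filter.
by apply: eq_bigl => n; rewrite !inE mem_filter mem_chars andbT.
Qed.

Definition syzygetic_leads : seq (nat * nat * nat) :=
  [:: (4, 4, 4); (2, 2, 4); (4, 2, 2); (2, 4, 2); (2, 2, 2); (2, 2, 2); (2, 4, 2); (4, 2, 2);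
      (2, 2, 2); (2, 2, 2); (2, 2, 4); (2, 2, 2); (2, 2, 2); (2, 2, 2); (2, 2, 2)]%N.

Lemma syzygetic_leadsE :
  [seq lead_seq l | l <- subseqs chars & syzygetic_seq l] = syzygetic_leads.
Proof. by rewrite /lead_seq unlock; vm_compute. Qed.

Lemma card_syzygetic_lead (P : pred (nat * nat * nat)) :
  #|[set Q | syzygetic Q & P (Tser_lead Q)]| = count P syzygetic_leads.
Proof.
rewrite -syzygetic_leadsE count_map count_filter.
rewrite -(eq_count (fun l => andbC (syzygetic_seq l) (P (lead_seq l)))).
rewrite -card_set_filter ?chars_uniq //; last exact: mem_chars.
by apply: eq_card => Q; rewrite !inE syzygetic_filter Tser_lead_filter.
Qed.

Lemma Tser_lead_syzygetic Q : syzygetic Q -> Tser_lead Q \in syzygetic_leads.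
Proof.
rewrite -syzygetic_leadsE Tser_lead_filter syzygetic_filter => syz_Q.
by apply: map_f; rewrite mem_filter syz_Q mem_subseqs filter_subseq.
Qed.

Definition omega_exponents (d : nat * nat * nat) : nat * nat * nat :=
  (d.1.1./2.-1, d.1.2./2.-1, d.2./2.-1).

Lemma expo_omega_exponents d nu : d \in syzygetic_leads ->
  (2 * (expo (omega_exponents d) nu).+1)%N = expo d nu.
Proof.
have : all (fun d => all (fun e => 2 * (e./2.-1).+1 == e)%N [:: d.1.1; d.1.2; d.2])
         syzygetic_leads by [].
move=> /allP leads_even /leads_even /and3P[/eqP e0 /eqP e1 /andP[/eqP e2 _]].
by case: nu => [[|[|[|n]]] lt_n]; rewrite /expo /=.
Qed.

Theorem proposition2p4 :
  #|[set Q : {set char2} | syzygetic Q]| = 15%N /\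
  exists k : {set char2} -> nat * nat * nat,
    (forall Q, syzygetic Q -> forall nu : 'I_3, omega_order Q nu (expo (k Q) nu)) /\
    #|[set Q | syzygetic Q & k Q == (0, 0, 0)%N]| = 8%N /\
    #|[set Q | syzygetic Q & k Q == (1, 1, 1)%N]| = 1%N /\
    #|[set Q | syzygetic Q & k Q == (0, 0, 1)%N]| = 2%N /\
    #|[set Q | syzygetic Q & k Q == (0, 1, 0)%N]| = 2%N /\
    #|[set Q | syzygetic Q & k Q == (1, 0, 0)%N]| = 2%N.
Proof.
pose k Q := omega_exponents (Tser_lead Q).
have card_k t : #|[set Q | syzygetic Q & k Q == t]| =
                count (fun d => omega_exponents d == t) syzygetic_leads.
  exact: (card_syzygetic_lead (fun d => omega_exponents d == t)).
split.
  rewrite -[15%N]/(count predT syzygetic_leads) -card_syzygetic_lead.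
  by apply: eq_card => Q; rewrite !inE andbT.
exists k; split; last by rewrite !card_k.
move=> Q syz_Q nu; rewrite /omega_order expo_omega_exponents ?Tser_lead_syzygetic //.
exact: leading_term_vanishing_order (leading_term_Tser Q) nu.
Qed.
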